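(* Let $k$ be an infinite field of characteristic $0$. (i) If $W_1=W(X_1,Y_1),W_2=W(X_2,Y_2)\in\Xi'$, $H\in\Xi$ and $(T_1,T_2)\in Cl_H(W_2)$, then $\mathcal{F}(\beta_{W_1,W_2}(T_1,T_2))=\beta_{\mathcal{F}(W_1),\mathcal{F}(W_2)}(T_1\oplus T_2)$. (ii) If $F_1=F(M_1),F_2=F(M_2)\in\mathrm{Ob}\,\Theta^0$, $(N,p)\in\Theta$ and $T\in Cl_N(F_2)$, then $\mathcal{F}^{-1}(\beta_{F_1,F_2}(T))=\beta_{\mathcal{F}^{-1}(F_1),\mathcal{F}^{-1}(F_2)}(T\cap\ker p,\,T\cap\mathrm{im}\,p)$, where $p$ here denotes the projection of $F_2$.
   Context: Representations $(L,V)$ (Lie algebra $L$ over $k$, $L$-module $V$) with homomorphisms $(\varphi,\psi)$ ($\varphi$ Lie homomorphism, $\psi$ linear, $\varphi(l)\circ\psi(v)=\psi(l\circ v)$) form $\Xi$. $W(X,Y)=(L(X),A(X)Y)$ is the free representation; $\Xi'$ is the set of $W(X,Y)$ with $X,Y$ finite subsets of fixed countable sets and $|X|=|Y|$. A Lie algebra with projection-derivation is a Lie algebra $M$ with linear $p$, $p^2=p$, $p[m_1,m_2]=[pm_1,m_2]+[m_1,pm_2]$; these form the variety $\Theta$, and $\Theta^0$ consists of its free algebras on finite subsets of a fixed countable set. The functor $\mathcal{F}$ sends $(L,V)$ to $(L\oplus V,p_V)$ ($[l_1+v_1,l_2+v_2]=[l_1,l_2]+l_1\circ v_2-l_2\circ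 v_1$, $p_V(l+v)=v$) and $(\varphi,\psi)$ to $\varphi\oplus\psi$; $\mathcal{F}^{-1}$ sends $(M,p)$ to $(\ker p,\mathrm{im}\,p)$ ($l\circ v=[l,v]$) and $f:(M_1,p_1)\to(M_2,p_2)$ to $(r_2f\kappa_1,p_2f\iota_1)$ with $r_2=\mathrm{id}-p_2$ and $\kappa_1,\iota_1$ inclusions; both are applied to pairs of morphisms componentwise. Closedness: for an algebra $H$, a free object $W$ and a subset $T$ of $W$ (a pair of subsets of the two sorts for representations), $T'_H$ is the set of homomorphisms $W\to H$ whose kernel contains $T$ (sortwise), $T''_H$ the (sortwise) intersection of their kernels, $T$ is $H$-closed if $T''_H=T$, and $Cl_H(W)$ is the set of $H$-closed subsets. For free objects $W_1,W_2$ and a congruence $T$ of $W_2$, $\beta_{W_1,W_2}(T)$ is the relation on $\mathrm{Hom}(W_1,W_2)$: two homomorphisms are related iff their values at every element of $W_1$ are congruent modulo $T$ (for representations: sortwise, the Lie parts modulo $T_1$ on $L(X_1)$ and the module parts modulo $T_2$ on $A(X_1)Y_1$). *)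

From HB Require Import structures.
From mathcomp Require Import all_boot all_algebra.
From mathcomp Require Import finmap.
Set Implicit Arguments.
Unset Strict Implicit.
Unset Printing Implicit Defensive.
Import GRing.Theory.
Local Open Scope ring_scope.

Section Defs.
Variable k : fieldType.

Definition lin (U V : lmodType k) (f : U -> V) : Prop :=
  forall (a : k) (x y : U), f (a *: x + y) = a *: f x + f y.

Lemma lin0 (U V : lmodType k) (f : U -> V) : lin f -> f 0 = 0.
Proof.
move=> H; have h := H 1 0 0; rewrite !scale1r addr0 in h.
by apply/esym/(addrI (f 0)); rewrite addr0 -h.
Qed.

Lemma linB (U V : lmodType k) (f : U -> V) x y : lin f -> f (y - x) = f y - f x.
Proof. by move=> H; rewrite -scaleN1r addrC H scaleN1r addrC. Qed.

Definition lie_ax (L : lmodType k) (br : L -> L -> L) : Prop :=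
  [/\ forall a, lin (br a), forall b, lin (fun x => br x b),
      forall x, br x x = 0 &
      forall x y z, br x (br y z) + br y (br z x) + br z (br x y) = 0].

Definition mod_ax (L V : lmodType k) (br : L -> L -> L) (act : L -> V -> V) : Prop :=
  [/\ forall l, lin (act l), forall v, lin (fun l => act l v) &
      forall a b v, act (br a b) v = act a (act b v) - act b (act a v)].

Record rep := Rep {
  rL : lmodType k; rbr : rL -> rL -> rL;
  rV : lmodType k; ract : rL -> rV -> rV;
  rep_lie : lie_ax rbr; rep_mod : mod_ax rbr ract }.

Definition rep_hom (L1 V1 L2 V2 : lmodType k)
  (br1 : L1 -> L1 -> L1) (act1 : L1 -> V1 -> V1)
  (br2 : L2 -> L2 -> L2) (act2 : L2 -> V2 -> V2)
  (phi : L1 -> L2) (psi : V1 -> V2) : Prop :=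
  [/\ lin phi, lin psi, forall a b, phi (br1 a b) = br2 (phi a) (phi b) &
      forall l v, act2 (phi l) (psi v) = psi (act1 l v)].

Definition rhom (W H : rep) := @rep_hom (rL W) (rV W) (rL H) (rV H)
  (@rbr W) (@ract W) (@rbr H) (@ract H).
Arguments rhom : clear implicits.

Definition free_rep (X Y : {fset nat}) (W : rep) (iX : X -> rL W) (iY : Y -> rV W) : Prop :=
  forall (H : rep) (f : X -> rL H) (g : Y -> rV H),
    (exists phi psi, rhom W H phi psi /\ (forall x, phi (iX x) = f x) /\
                                        (forall y, psi (iY y) = g y)) /\
    (forall phi psi phi' psi', rhom W H phi psi -> rhom W H phi' psi' ->
       (forall x, phi (iX x) = phi' (iX x)) -> (forall y, psi (iY y) = psi' (iY y)) ->
       (forall l, phi l = phi' l) /\ (forall v, psi v = psi' v)).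

Definition rep_primeH (L2 V2 LH VH : lmodType k)
  (br2 : L2 -> L2 -> L2) (act2 : L2 -> V2 -> V2)
  (brH : LH -> LH -> LH) (actH : LH -> VH -> VH)
  (T1 : L2 -> Prop) (T2 : V2 -> Prop) (phi : L2 -> LH) (psi : V2 -> VH) : Prop :=
  rep_hom br2 act2 brH actH phi psi /\
  (forall l, T1 l -> phi l = 0) /\ (forall v, T2 v -> psi v = 0).

Definition rep_closed (L2 V2 LH VH : lmodType k)
  (br2 : L2 -> L2 -> L2) (act2 : L2 -> V2 -> V2)
  (brH : LH -> LH -> LH) (actH : LH -> VH -> VH)
  (T1 : L2 -> Prop) (T2 : V2 -> Prop) : Prop :=
  (forall l, T1 l <-> forall phi psi,
      rep_primeH br2 act2 brH actH T1 T2 phi psi -> phi l = 0) /\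
  (forall v, T2 v <-> forall phi psi,
      rep_primeH br2 act2 brH actH T1 T2 phi psi -> psi v = 0).

Definition rep_beta (L1 V1 L2 V2 : lmodType k) (T1 : L2 -> Prop) (T2 : V2 -> Prop)
  (phi : L1 -> L2) (psi : V1 -> V2) (phi' : L1 -> L2) (psi' : V1 -> V2) : Prop :=
  (forall l, T1 (phi l - phi' l)) /\ (forall v, T2 (psi v - psi' v)).

Definition pd_ax (M : lmodType k) (br : M -> M -> M) (p : M -> M) : Prop :=
  [/\ lie_ax br, lin p, forall x, p (p x) = p x &
      forall a b, p (br a b) = br (p a) b + br a (p b)].

Record pd := PD { pM : lmodType k; pbr : pM -> pM -> pM; pp : pM -> pM;
                  pd_axP : pd_ax pbr pp }.

Definition pd_hom (M1 M2 : lmodType k) (br1 : M1 -> M1 -> M1) (p1 : M1 -> M1)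
  (br2 : M2 -> M2 -> M2) (p2 : M2 -> M2) (f : M1 -> M2) : Prop :=
  [/\ lin f, forall a b, f (br1 a b) = br2 (f a) (f b) & forall x, f (p1 x) = p2 (f x)].

Definition phom (F G : pd) := @pd_hom (pM F) (pM G) (@pbr F) (@pp F) (@pbr G) (@pp G).
Arguments phom : clear implicits.

Definition free_pd (X : {fset nat}) (F : pd) (iX : X -> pM F) : Prop :=
  forall (N : pd) (g : X -> pM N),
    (exists h, phom F N h /\ forall x, h (iX x) = g x) /\
    (forall h h', phom F N h -> phom F N h' -> (forall x, h (iX x) = h' (iX x)) ->
       forall m, h m = h' m).

Definition pd_primeH (M MH : lmodType k) (br : M -> M -> M) (p : M -> M)
  (brH : MH -> MH -> MH) (pH : MH -> MH) (T : M -> Prop) (h : M -> MH) : Prop :=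
  pd_hom br p brH pH h /\ (forall m, T m -> h m = 0).

Definition pd_closed (M MH : lmodType k) (br : M -> M -> M) (p : M -> M)
  (brH : MH -> MH -> MH) (pH : MH -> MH) (T : M -> Prop) : Prop :=
  forall m, T m <-> forall h, pd_primeH br p brH pH T h -> h m = 0.

Definition pd_beta (M1 M2 : lmodType k) (T : M2 -> Prop) (f g : M1 -> M2) : Prop :=
  forall m, T (f m - g m).

(* The functor F on objects: (L + V, p_V) *)
Definition Fbr (W : rep) (x y : rL W * rV W) : rL W * rV W :=
  (rbr x.1 y.1, ract x.1 y.2 - ract y.1 x.2).
Definition Fp (W : rep) (x : rL W * rV W) : rL W * rV W := (0, x.2).
(* ... and on morphisms: phi (+) psi *)
Definition Fmor (L1 V1 L2 V2 : Type) (phi : L1 -> L2) (psi : V1 -> V2)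
  (x : L1 * V1) : L2 * V2 := (phi x.1, psi x.2).
Definition Tsum (L V : Type) (T1 : L -> Prop) (T2 : V -> Prop) (x : L * V) : Prop :=
  T1 x.1 /\ T2 x.2.

(* The functor F^{-1}: (M,p) |-> (ker p, im p) *)
Section Finv.
Variable F : pd.
Let M := pM F.
Let br := @pbr F.
Let p := @pp F.

Lemma pd_lie : lie_ax br. Proof. by case: (pd_axP F). Qed.
Lemma pd_lin : lin p. Proof. by case: (pd_axP F). Qed.
Lemma pd_idem x : p (p x) = p x. Proof. by case: (pd_axP F). Qed.
Lemma pd_der a b : p (br a b) = br (p a) b + br a (p b). Proof. by case: (pd_axP F). Qed.

Definition kerp : {pred M} := [pred x | p x == 0].
(* im p, written as the fixed points of the idempotent p *)
Definition imp : {pred M} := [pred x | p x == x].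

Lemma kerp_closed : GRing.subsemimod_closed kerp.
Proof.
split; [split|].
- by rewrite inE (lin0 pd_lin).
- move=> x y; rewrite !inE => /eqP hx /eqP hy.
  by have := pd_lin 1 x y; rewrite !scale1r hx hy addr0 => ->.
- move=> a x; rewrite !inE => /eqP hx.
  by have := pd_lin a x 0; rewrite !addr0 (lin0 pd_lin) hx scaler0 addr0 => ->.
Qed.

Lemma imp_closed : GRing.subsemimod_closed imp.
Proof.
split; [split|].
- by rewrite inE (lin0 pd_lin).
- move=> x y; rewrite !inE => /eqP hx /eqP hy.
  by have := pd_lin 1 x y; rewrite !scale1r hx hy => ->.
- move=> a x; rewrite !inE => /eqP hx.
  by have := pd_lin a x 0; rewrite !addr0 (lin0 pd_lin) hx addr0 => ->.
Qed.

HB.instance Definition _ := GRing.isSubmodClosed.Build k M kerp kerp_closed.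
HB.instance Definition _ := GRing.isSubmodClosed.Build k M imp imp_closed.

Record kerT := KerT { kval :> M; kvalP : kval \in kerp }.
HB.instance Definition _ := [isSub for kval].
HB.instance Definition _ := [Choice of kerT by <:].
HB.instance Definition _ := [SubChoice_isSubLmodule of kerT by <:].

Record imT := ImT { ival :> M; ivalP : ival \in imp }.
HB.instance Definition _ := [isSub for ival].
HB.instance Definition _ := [Choice of imT by <:].
HB.instance Definition _ := [SubChoice_isSubLmodule of imT by <:].

Lemma br0l b : br 0 b = 0.
Proof. by case: pd_lie => _ H _ _; exact: (lin0 (H b)). Qed.
Lemma br0r a : br a 0 = 0.
Proof. by case: pd_lie => H _ _ _; exact: (lin0 (H a)). Qed.

Lemma kbr_subproof (a b : kerT) : br a b \in kerp.
Proof.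
have /eqP ha := kvalP a; have /eqP hb := kvalP b.
by rewrite inE pd_der ha hb br0l br0r addr0.
Qed.
Definition kbr (a b : kerT) : kerT := KerT (kbr_subproof a b).

Lemma kact_subproof (l : kerT) (v : imT) : br l v \in imp.
Proof.
have /eqP hl := kvalP l; have /eqP hv := ivalP v.
by rewrite inE pd_der hl hv br0l add0r.
Qed.
Definition kact (l : kerT) (v : imT) : imT := ImT (kact_subproof l v).
End Finv.

Section FinvMor.
Variables F1 F2 : pd.
Lemma FinvL_subproof (f : pM F1 -> pM F2) (x : kerT F1) :
  f x - pp (f x) \in @kerp F2.
Proof. by rewrite inE linB ?pd_idem ?subrr //; apply: pd_lin. Qed.
Definition FinvL (f : pM F1 -> pM F2) (x : kerT F1) : kerT F2 :=
  KerT (FinvL_subproof f x).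
Lemma FinvV_subproof (f : pM F1 -> pM F2) (v : imT F1) : pp (f v) \in @imp F2.
Proof. by rewrite inE pd_idem. Qed.
Definition FinvV (f : pM F1 -> pM F2) (v : imT F1) : imT F2 :=
  ImT (FinvV_subproof f v).
End FinvMor.

End Defs.
Arguments rhom {k} W H phi psi.
Arguments phom {k} F G f.

From HB Require Import structures.
From mathcomp Require Import all_boot all_algebra.
From mathcomp Require Import finmap.
From Stdlib Require Import FunctionalExtensionality.
Set Implicit Arguments.
Unset Strict Implicit.
Unset Printing Implicit Defensive.
Import GRing.Theory.
Local Open Scope ring_scope.

(* (i) A morphism f of (L + V, p_V) commutes with p_V, so it maps L to L and
   V to V; hence f = phi (+) psi, and the bracket condition on
   L + V splits into "phi is a Lie morphism" and "psi is compatible with the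
   action".  Congruence modulo T1 (+) T2 is componentwise by definition.
   (ii) Every (M, p) splits as ker p (+) im p and a morphism, commuting with p,
   preserves both summands, so it is recovered from its restrictions.
   Conversely a morphism (phi, psi) of (ker p, im p) glues to
   m |-> phi (m - p m) + psi (p m); this respects brackets because in
   characteristic <> 2 the bracket of two elements of im p vanishes:
   p [v, w] = 2 [v, w] and p p = p force [v, w] = 0.  Congruences transfer
   because a closed T is an intersection of kernels, hence additive. *)

Section Linear.
Variables (k : fieldType) (U V : lmodType k) (f : U -> V).
Hypothesis f_lin : lin f.

Lemma linD x y : f (x + y) = f x + f y.
Proof. by have := f_lin 1 x y; rewrite !scale1r. Qed.

Lemma linN x : f (- x) = - f x.
Proof. by rewrite -sub0r linB // (lin0 f_lin) sub0r. Qed.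

End Linear.

Section LieBracket.
Variables (k : fieldType) (L : lmodType k) (br : L -> L -> L).
Hypothesis br_lie : lie_ax br.

Lemma lie_brDr a x y : br a (x + y) = br a x + br a y.
Proof. by case: br_lie => lin_r _ _ _; exact: linD. Qed.

Lemma lie_brDl b x y : br (x + y) b = br x b + br y b.
Proof. by case: br_lie => _ lin_l _ _; exact: (linD (lin_l b)). Qed.

Lemma lie_brC a b : br a b = - br b a.
Proof.
case: br_lie => _ _ brxx _.
have := brxx (a + b).
rewrite lie_brDl !lie_brDr !brxx add0r addr0 => /eqP.
by rewrite addr_eq0 => /eqP.
Qed.

End LieBracket.

Section ProjectionDerivation.
Variables (k : fieldType) (F : pd k).
Local Notation br := (@pbr k F).
Local Notation p := (@pp k F).

Lemma ppD x y : p (x + y) = p x + p y.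
Proof. exact: (linD (@pd_lin k F) x y). Qed.

Lemma pp_ker (x : kerT F) : p (kval x) = 0.
Proof. exact/eqP/kvalP. Qed.

Lemma pp_im (v : imT F) : p (ival v) = ival v.
Proof. exact/eqP/ivalP. Qed.

Lemma pbr_im_eq0 : (2%:R : k) != 0 ->
  forall v w, p v = v -> p w = w -> br v w = 0.
Proof.
move=> two_neq0 v w pv pw.
have p_br : p (br v w) = br v w + br v w by rewrite pd_der pv pw.
have p_br0 : p (br v w) = 0.
  apply: (addrI (p (br v w))).
  by rewrite addr0 -ppD -p_br pd_idem.
have : (2%:R : k) *: br v w = 0 by rewrite scaler_nat mulr2n -p_br.
by move/eqP; rewrite scaler_eq0 (negbTE two_neq0) => /eqP.
Qed.

Lemma kval_inj : injective (@kval k F). Proof. exact: val_inj. Qed.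
Lemma ival_inj : injective (@ival k F). Proof. exact: val_inj. Qed.
Lemma kval_lin : lin (@kval k F). Proof. by []. Qed.
Lemma ival_lin : lin (@ival k F). Proof. by []. Qed.
Lemma kval_br a b : kval (kbr a b) = br (kval a) (kval b). Proof. by []. Qed.
Lemma ival_act l v : ival (kact l v) = br (kval l) (ival v). Proof. by []. Qed.

Lemma ker_part_subproof m : m - p m \in @kerp k F.
Proof. by rewrite inE linB ?pd_idem ?subrr //; apply: pd_lin. Qed.
Definition ker_part m : kerT F := KerT (ker_part_subproof m).

Lemma im_part_subproof m : p m \in @imp k F.
Proof. by rewrite inE pd_idem. Qed.
Definition im_part m : imT F := ImT (im_part_subproof m).

Lemma ker_im_decomp m : m = kval (ker_part m) + ival (im_part m).
Proof. by rewrite /= subrK. Qed.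

Lemma ker_partK (x : kerT F) : ker_part (kval x) = x.
Proof. by apply: val_inj; rewrite /= pp_ker subr0. Qed.

Lemma im_part_ker (x : kerT F) : im_part (kval x) = 0.
Proof. by apply: val_inj; rewrite /= pp_ker. Qed.

Lemma im_partK (v : imT F) : im_part (ival v) = v.
Proof. by apply: val_inj; rewrite /= pp_im. Qed.

Lemma ker_part_im (v : imT F) : ker_part (ival v) = 0.
Proof. by apply: val_inj; rewrite /= pp_im subrr. Qed.

Lemma ker_part_lin : lin ker_part.
Proof.
by move=> a x y; apply: val_inj; rewrite /= (@pd_lin k F) scalerBr opprD addrACA.
Qed.

Lemma im_part_lin : lin im_part.
Proof. by move=> a x y; apply: val_inj; rewrite /= (@pd_lin k F). Qed.

Lemma pd_closed_addr (N : pd k) (T : pM F -> Prop) :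
  pd_closed br p (@pbr k N) (@pp k N) T -> forall a b, T a -> T b -> T (a + b).
Proof.
move=> T_closed a b Ta Tb; apply/T_closed => h h_prime.
have [[h_lin _ _] _] := h_prime.
by rewrite (linD h_lin) (proj1 (T_closed a) Ta h h_prime)
           (proj1 (T_closed b) Tb h h_prime) addr0.
Qed.

End ProjectionDerivation.

Section FinvMorphism.
Variables (k : fieldType) (F1 F2 : pd k) (f : pM F1 -> pM F2).
Hypothesis f_hom : phom F1 F2 f.

Lemma FinvL_val x : kval (FinvL f x) = f (kval x).
Proof. by case: f_hom => f_lin _ f_p; rewrite /= -f_p pp_ker (lin0 f_lin) subr0. Qed.

Lemma FinvV_val v : ival (FinvV f v) = f (ival v).
Proof. by case: f_hom => _ _ f_p; rewrite /= -f_p pp_im. Qed.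

Lemma rep_hom_Finv :
  rep_hom (@kbr _ F1) (@kact _ F1) (@kbr _ F2) (@kact _ F2) (FinvL f) (FinvV f).
Proof.
case: f_hom => f_lin f_br _; split=> [a x y|a x y|a b|l v].
- by apply: kval_inj; rewrite kval_lin !FinvL_val kval_lin f_lin.
- by apply: ival_inj; rewrite ival_lin !FinvV_val ival_lin f_lin.
- by apply: kval_inj; rewrite FinvL_val !kval_br !FinvL_val f_br.
- by apply: ival_inj; rewrite FinvV_val !ival_act FinvV_val FinvL_val f_br.
Qed.

End FinvMorphism.

Section Glue.
Variables (k : fieldType) (F1 F2 : pd k).
Variables (phi : kerT F1 -> kerT F2) (psi : imT F1 -> imT F2).
Hypothesis phi_psi_hom :
  rep_hom (@kbr _ F1) (@kact _ F1) (@kbr _ F2) (@kact _ F2) phi psi.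

Definition pd_glue m : pM F2 := kval (phi (ker_part m)) + ival (psi (im_part m)).

Let phi_lin : lin phi. Proof. by case: phi_psi_hom. Qed.
Let psi_lin : lin psi. Proof. by case: phi_psi_hom. Qed.

Lemma pd_glue_ker x : pd_glue (kval x) = kval (phi x).
Proof. by rewrite /pd_glue ker_partK im_part_ker (lin0 psi_lin) addr0. Qed.

Lemma pd_glue_im v : pd_glue (ival v) = ival (psi v).
Proof. by rewrite /pd_glue im_partK ker_part_im (lin0 phi_lin) add0r. Qed.

Lemma pd_glue_lin : lin pd_glue.
Proof.
move=> a x y; rewrite /pd_glue ker_part_lin im_part_lin phi_lin psi_lin /=.
by rewrite scalerDr addrACA.
Qed.

Lemma pd_glue_p m : pd_glue (pp m) = pp (pd_glue m).
Proof. by rewrite {2}/pd_glue ppD pp_ker pp_im add0r -pd_glue_im. Qed.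

Hypothesis two_neq0 : (2%:R : k) != 0.

Lemma pd_glue_br_parts (a0 b0 : kerT F1) (a1 b1 : imT F1) :
  pd_glue (pbr (kval a0 + ival a1) (kval b0 + ival b1)) =
  pbr (kval (phi a0) + ival (psi a1)) (kval (phi b0) + ival (psi b1)).
Proof.
case: phi_psi_hom => _ _ phi_br psi_act.
have lie1 := pd_lie F1; have lie2 := pd_lie F2.
rewrite !(lie_brDl lie1) !(lie_brDr lie1) !(lie_brDl lie2) !(lie_brDr lie2).
rewrite (lie_brC lie1 (ival a1)) (lie_brC lie2 (ival (psi a1))).
rewrite (pbr_im_eq0 two_neq0 (pp_im a1) (pp_im b1)).
rewrite (pbr_im_eq0 two_neq0 (pp_im (psi a1)) (pp_im (psi b1))) !addr0.
rewrite !(linD pd_glue_lin) (linN pd_glue_lin).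
by rewrite -kval_br -!ival_act pd_glue_ker !pd_glue_im phi_br -!psi_act.
Qed.

Lemma pd_glue_br a b : pd_glue (pbr a b) = pbr (pd_glue a) (pd_glue b).
Proof.
rewrite (ker_im_decomp a) (ker_im_decomp b).
move: (ker_part a) (im_part a) (ker_part b) (im_part b) => a0 a1 b0 b1.
by rewrite pd_glue_br_parts !(linD pd_glue_lin) !pd_glue_ker !pd_glue_im.
Qed.

Lemma phom_glue : phom F1 F2 pd_glue.
Proof. by split; [exact: pd_glue_lin | exact: pd_glue_br | exact: pd_glue_p]. Qed.

Lemma FinvL_glue : FinvL pd_glue = phi.
Proof.
by apply: functional_extensionality => x; apply: kval_inj;
   rewrite (FinvL_val phom_glue) pd_glue_ker.
Qed.

Lemma FinvV_glue : FinvV pd_glue = psi.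
Proof.
by apply: functional_extensionality => v; apply: ival_inj;
   rewrite (FinvV_val phom_glue) pd_glue_im.
Qed.

End Glue.

Section Congruence.
Variables (k : fieldType) (F1 F2 : pd k) (T : pM F2 -> Prop).

Lemma rep_beta_Finv (f g : pM F1 -> pM F2) :
  phom F1 F2 f -> phom F1 F2 g -> pd_beta T f g ->
  rep_beta (fun x : kerT F2 => T (kval x)) (fun v : imT F2 => T (ival v))
           (FinvL f) (FinvV f) (FinvL g) (FinvV g).
Proof.
move=> f_hom g_hom f_g; split=> [x|v].
- by rewrite (linB _ _ (@kval_lin _ _)) !FinvL_val.
- by rewrite (linB _ _ (@ival_lin _ _)) !FinvV_val.
Qed.

Hypothesis T_addr : forall a b, T a -> T b -> T (a + b).

Lemma pd_beta_glue (phi phi' : kerT F1 -> kerT F2) (psi psi' : imT F1 -> imT F2) :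
  rep_beta (fun x : kerT F2 => T (kval x)) (fun v : imT F2 => T (ival v))
           phi psi phi' psi' ->
  pd_beta T (pd_glue phi psi) (pd_glue phi' psi').
Proof.
case=> phi_phi' psi_psi' m; rewrite /pd_glue opprD addrACA.
by rewrite -(linB _ _ (@kval_lin _ _)) -(linB _ _ (@ival_lin _ _)); apply: T_addr.
Qed.

End Congruence.

Section RepresentationFunctor.
Variables (k : fieldType) (W1 W2 : rep k).

Lemma pd_beta_Fmor (L1 V1 L2 V2 : lmodType k) (T1 : L2 -> Prop) (T2 : V2 -> Prop)
    (phi phi' : L1 -> L2) (psi psi' : V1 -> V2) :
  pd_beta (Tsum T1 T2) (Fmor phi psi) (Fmor phi' psi') <->
  rep_beta T1 T2 phi psi phi' psi'.
Proof.
split=> [f_g | [phi_phi' psi_psi'] [l v]].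
  by split=> [l|v]; [case: (f_g (l, 0)) | case: (f_g (0, v))].
exact: (conj (phi_phi' l) (psi_psi' v)).
Qed.

Lemma lin_Fmor (L1 V1 L2 V2 : lmodType k) (phi : L1 -> L2) (psi : V1 -> V2) :
  lin (Fmor phi psi) <-> lin phi /\ lin psi.
Proof.
split=> [Flin | [phi_lin psi_lin] a [x1 x2] [y1 y2]].
  by split=> a x y; [exact: (congr1 fst (Flin a (x, 0) (y, 0)))
                    | exact: (congr1 snd (Flin a (0, x) (0, y)))].
by rewrite /Fmor /= phi_lin psi_lin.
Qed.

Lemma ract0l (W : rep k) v : ract (0 : rL W) v = 0.
Proof. by case: (rep_mod W) => _ act_lin _; exact: (lin0 (act_lin v)). Qed.

Local Notation F_hom f :=
  (pd_hom (@Fbr _ W1) (@Fp _ W1) (@Fbr _ W2) (@Fp _ W2) f).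

Lemma pd_hom_Fmor phi psi : rhom W1 W2 phi psi -> F_hom (Fmor phi psi).
Proof.
case=> phi_lin psi_lin phi_br psi_act; split.
- exact: (proj2 (lin_Fmor phi psi) (conj phi_lin psi_lin)).
- by move=> [a1 a2] [b1 b2]; rewrite /Fmor /Fbr /= phi_br linB // !psi_act.
- by move=> [x1 x2]; rewrite /Fmor /Fp /= (lin0 phi_lin).
Qed.

Lemma pd_hom_F_pair f :
  F_hom f -> forall l v, f (l, v) = ((f (l, 0)).1, (f (0, v)).2).
Proof.
case=> f_lin _ f_p l v.
have f0 : f 0 = 0 := lin0 f_lin.
have f_l : (f (l, 0)).2 = 0 by have := congr1 snd (f_p (l, 0)); rewrite /= f0.
have f_v : (f (0, v)).1 = 0 by have := congr1 fst (f_p (0, v)).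
have -> : (l, v) = (l, 0) + (0, v).
  by apply: injective_projections; rewrite /= ?addr0 ?add0r.
rewrite (linD f_lin).
by apply: injective_projections; rewrite /= ?f_l ?f_v ?addr0 ?add0r.
Qed.

Lemma pd_hom_F_Fmor f :
  F_hom f -> exists phi psi, rhom W1 W2 phi psi /\ f = Fmor phi psi.
Proof.
move=> f_hom; pose phi l := (f (l, 0)).1; pose psi v := (f (0, v)).2.
have f_Fmor : f = Fmor phi psi.
  by apply: functional_extensionality => -[l v]; exact: pd_hom_F_pair.
exists phi, psi; split=> //.
case: f_hom; rewrite f_Fmor => /lin_Fmor [phi_lin psi_lin] f_br _.
split=> // [a b | l v].
- exact: (congr1 fst (f_br (a, 0) (b, 0))).
- have := congr1 snd (f_br (l, 0) (0, v)).
  by rewrite /= (lin0 phi_lin) !ract0l !subr0.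
Qed.

End RepresentationFunctor.

Local Open Scope fset_scope.
Theorem proposition8 (k : fieldType)
  (char0 : [pchar k] =i pred0)
  (k_infinite : forall s : seq k, exists x : k, x \notin s) :
  (* (i) *)
  (forall (X1 Y1 X2 Y2 : {fset nat}),
     #|` X1| = #|` Y1| -> #|` X2| = #|` Y2| ->
   forall (W1 W2 : rep k) (iX1 : X1 -> rL W1) (iY1 : Y1 -> rV W1)
          (iX2 : X2 -> rL W2) (iY2 : Y2 -> rV W2),
   free_rep iX1 iY1 -> free_rep iX2 iY2 ->
   forall (H : rep k) (T1 : rL W2 -> Prop) (T2 : rV W2 -> Prop),
   rep_closed (@rbr _ W2) (@ract _ W2) (@rbr _ H) (@ract _ H) T1 T2 ->
   forall f g : rL W1 * rV W1 -> rL W2 * rV W2,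
     (exists phi psi phi' psi',
        rhom W1 W2 phi psi /\ rhom W1 W2 phi' psi' /\
        rep_beta T1 T2 phi psi phi' psi' /\
        f = Fmor phi psi /\ g = Fmor phi' psi')
     <->
     (pd_hom (@Fbr _ W1) (@Fp _ W1) (@Fbr _ W2) (@Fp _ W2) f /\
      pd_hom (@Fbr _ W1) (@Fp _ W1) (@Fbr _ W2) (@Fp _ W2) g /\
      pd_beta (Tsum T1 T2) f g))
  /\
  (* (ii) *)
  (forall (M1 M2 : {fset nat}) (F1 F2 : pd k)
          (iM1 : M1 -> pM F1) (iM2 : M2 -> pM F2),
   free_pd iM1 -> free_pd iM2 ->
   forall (N : pd k) (T : pM F2 -> Prop),
   pd_closed (@pbr _ F2) (@pp _ F2) (@pbr _ N) (@pp _ N) T ->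
   forall (phi phi' : kerT F1 -> kerT F2) (psi psi' : imT F1 -> imT F2),
     (exists f g, phom F1 F2 f /\ phom F1 F2 g /\ pd_beta T f g /\
        phi = FinvL f /\ psi = FinvV f /\ phi' = FinvL g /\ psi' = FinvV g)
     <->
     (rep_hom (@kbr _ F1) (@kact _ F1) (@kbr _ F2) (@kact _ F2) phi psi /\
      rep_hom (@kbr _ F1) (@kact _ F1) (@kbr _ F2) (@kact _ F2) phi' psi' /\
      rep_beta (fun x : kerT F2 => T (kval x)) (fun v : imT F2 => T (ival v))
               phi psi phi' psi')).
Proof.
have two_neq0 : (2%:R : k) != 0 by have := char0 2; rewrite !inE /= => ->.
split.
- move=> X1 Y1 X2 Y2 _ _ W1 W2 iX1 iY1 iX2 iY2 _ _ H T1 T2 _ f g; split.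
  + case=> phi [psi [phi' [psi' [hom [hom' [beta [-> ->]]]]]]].
    by rewrite pd_beta_Fmor; split; [exact: pd_hom_Fmor | split; [exact: pd_hom_Fmor |]].
  + case=> /pd_hom_F_Fmor [phi [psi [hom ->]]] [/pd_hom_F_Fmor [phi' [psi' [hom' ->]]]].
    by rewrite pd_beta_Fmor => beta; exists phi, psi, phi', psi'.
- move=> M1 M2 F1 F2 iM1 iM2 _ _ N T T_closed phi phi' psi psi'; split.
  + case=> f [g [f_hom [g_hom [beta [-> [-> [-> ->]]]]]]].
    split; [exact: rep_hom_Finv | split; [exact: rep_hom_Finv | exact: rep_beta_Finv]].
  + case=> hom [hom' beta].
    exists (pd_glue phi psi), (pd_glue phi' psi').
    rewrite !FinvL_glue // !FinvV_glue //.
    split; [exact: phom_glue | split; [exact: phom_glue |]].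
    by split=> //; apply: pd_beta_glue => //; exact: pd_closed_addr T_closed.
Qed.
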